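(* For every dual quaternion $\hat a\in\hat{\mathbb Q}$ there exist a unit dual quaternion $\hat q\in\hat{\mathbb U}$ and a dual complex number $\hat\lambda\in\mathbb{DC}$ such that $\hat q^*\hat a\hat q=\hat\lambda$.
   Context: $\mathbb{Q}$ denotes the real quaternions with units $i,j,k$; complex numbers are identified with quaternions $a+bi$. $\varepsilon$ satisfies $\varepsilon\ne0$, $\varepsilon^2=0$ and commutes with quaternions. A dual quaternion is $\hat p=\tilde p_{st}+\tilde p_{\mathcal I}\varepsilon$ with $\tilde p_{st},\tilde p_{\mathcal I}\in\mathbb Q$; its conjugate is $\hat p^*=\tilde p_{st}^*+\tilde p_{\mathcal I}^*\varepsilon$. $\mathbb{DC}$ is the set of dual complex numbers $a_{st}+a_{\mathcal I}\varepsilon$ with $a_{st},a_{\mathcal I}\in\mathbb C$. The absolute value of $\hat p$ is $|\tilde p_{st}|+\frac{\mathrm{sc}(\tilde p_{st}^*\tilde p_{\mathcal I})}{|\tilde p_{st}|}\varepsilon$ if $\tilde p_{st}\neq0$ and $|\tilde p_{\mathcal I}|\varepsilon$ otherwise, with $\mathrm{sc}(\tilde p)=\frac12(\tilde p+\tilde p^* )$; $\hat p$ is a unit dual quaternion if $|\hat p|=1$ (equivalently $\hat p^*\hat p=\hat p\hat p^*=1$). $\hat{\mathbb U}$ is the set of unit dual quaternions. *)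

From Stdlib Require Import Reals.
Open Scope R_scope.

Record quat := Quat { q0 : R; q1 : R; q2 : R; q3 : R }.

Definition qzero : quat := Quat 0 0 0 0.
Definition qone : quat := Quat 1 0 0 0.

Definition qadd (a b : quat) : quat :=
  Quat (q0 a + q0 b) (q1 a + q1 b) (q2 a + q2 b) (q3 a + q3 b).

(** Hamilton product (i^2 = j^2 = k^2 = ijk = -1). *)
Definition qmul (a b : quat) : quat :=
  Quat (q0 a * q0 b - q1 a * q1 b - q2 a * q2 b - q3 a * q3 b)
       (q0 a * q1 b + q1 a * q0 b + q2 a * q3 b - q3 a * q2 b)
       (q0 a * q2 b - q1 a * q3 b + q2 a * q0 b + q3 a * q1 b)
       (q0 a * q3 b + q1 a * q2 b - q2 a * q1 b + q3 a * q0 b).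

Definition qconj (a : quat) : quat := Quat (q0 a) (- q1 a) (- q2 a) (- q3 a).

Definition qnorm (a : quat) : R :=
  sqrt (q0 a * q0 a + q1 a * q1 a + q2 a * q2 a + q3 a * q3 a).

(** sc(p) = (p + conj p)/2, a real quaternion, identified with its real part. *)
Definition qsc (a : quat) : R := q0 a.

Definition is_complex (a : quat) : Prop := q2 a = 0 /\ q3 a = 0.

Definition quat_eq_dec (a b : quat) : {a = b} + {a <> b}.
Proof. decide equality; apply Req_EM_T. Defined.

(** Dual quaternions p_st + p_I eps, eps^2 = 0. *)
Record dquat := DQ { dst : quat; dinf : quat }.

Definition dqmul (p r : dquat) : dquat :=
  DQ (qmul (dst p) (dst r)) (qadd (qmul (dst p) (dinf r)) (qmul (dinf p) (dst r))).

Definition dqconj (p : dquat) : dquat := DQ (qconj (dst p)) (qconj (dinf p)).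

(** Dual real numbers a_st + a_I eps, as pairs (a_st, a_I). *)
Definition dreal := (R * R)%type.

Definition dqabs (p : dquat) : dreal :=
  if quat_eq_dec (dst p) qzero
  then (0, qnorm (dinf p))
  else (qnorm (dst p), qsc (qmul (qconj (dst p)) (dinf p)) / qnorm (dst p)).

Definition is_unit_dq (p : dquat) : Prop := dqabs p = (1, 0).

Definition is_dual_complex (p : dquat) : Prop :=
  is_complex (dst p) /\ is_complex (dinf p).

(* Write a unit dual quaternion as q = u (1 + w ε) with u a unit quaternion and
   w a pure quaternion.  Then q^* (x + y ε) q = u^* x u + (u^* y u + c w - w c) ε
   with c = u^* x u.  A rotation u brings the vector part of x onto the i-axis,
   so c = x0 + r i is complex; when r > 0 the commutator c w - w c = 2 r (i × w)
   can cancel the j- and k-components of u^* y u, and when x is real one instead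
   chooses u to rotate y onto the i-axis and takes w = 0. *)

From Stdlib Require Import Reals Psatz Nsatz.
Open Scope R_scope.

Definition qnorm2 (a : quat) : R :=
  q0 a * q0 a + q1 a * q1 a + q2 a * q2 a + q3 a * q3 a.

Definition qvnorm2 (a : quat) : R := q1 a * q1 a + q2 a * q2 a + q3 a * q3 a.

Definition qscale (k : R) (a : quat) : quat :=
  Quat (k * q0 a) (k * q1 a) (k * q2 a) (k * q3 a).

Definition conjby (u x : quat) : quat := qmul (qmul (qconj u) x) u.

(* [dq_of u w] is the dual quaternion u (1 + w ε). *)
Definition dq_of (u w : quat) : dquat := DQ u (qmul u w).

Lemma qnorm2_ge0 (a : quat) : 0 <= qnorm2 a.
Proof. unfold qnorm2; nra. Qed.

Lemma qnorm_eq1 (a : quat) : qnorm2 a = 1 -> qnorm a = 1.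
Proof. intros H; unfold qnorm; fold (qnorm2 a); rewrite H; apply sqrt_1. Qed.

Lemma qnorm2_qscale (k : R) (a : quat) : qnorm2 (qscale k a) = k * k * qnorm2 a.
Proof. unfold qnorm2, qscale; simpl; ring. Qed.

Lemma conjby_qscale (k : R) (u x : quat) :
  conjby (qscale k u) x = qscale (k * k) (conjby u x).
Proof. unfold conjby, qscale, qmul, qconj; simpl; f_equal; ring. Qed.

Lemma conjby_real (u : quat) (r : R) :
  conjby u (Quat r 0 0 0) = Quat (qnorm2 u * r) 0 0 0.
Proof. unfold conjby, qnorm2, qmul, qconj; simpl; f_equal; ring. Qed.

Lemma conjby_normalize (u x : quat) : qnorm2 u <> 0 ->
  exists u1, qnorm2 u1 = 1 /\ conjby u1 x = qscale (/ qnorm2 u) (conjby u x).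
Proof.
  intros Hu.
  assert (Hpos : 0 < qnorm2 u) by (pose proof (qnorm2_ge0 u); lra).
  assert (Hk : / sqrt (qnorm2 u) * / sqrt (qnorm2 u) = / qnorm2 u).
  { rewrite <- Rinv_mult, sqrt_sqrt; lra. }
  exists (qscale (/ sqrt (qnorm2 u)) u); split.
  - rewrite qnorm2_qscale, Hk; field; lra.
  - rewrite conjby_qscale, Hk; reflexivity.
Qed.

(* For v = v1 i + v2 j + v3 k of length r, u = r + i·v + i × v is the
   unnormalised half-angle rotation between the axes of i and v. *)
Lemma conjby_to_i_unnormalized (x0 v1 v2 v3 r : R) :
  r * r = v1 * v1 + v2 * v2 + v3 * v3 ->
  let u := Quat (r + v1) 0 (- v3) v2 in
  conjby u (Quat x0 v1 v2 v3) = qscale (qnorm2 u) (Quat x0 r 0 0).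
Proof. intros Hr; unfold conjby, qscale, qnorm2, qmul, qconj; simpl; f_equal; nsatz. Qed.

(* The witness above vanishes only when v = -r i, which conjugation by j sends to r i. *)
Lemma conjby_rotate_to_i (x : quat) :
  exists u, qnorm2 u = 1 /\ conjby u x = Quat (q0 x) (sqrt (qvnorm2 x)) 0 0.
Proof.
  destruct x as [x0 v1 v2 v3]; unfold qvnorm2; simpl.
  set (r := sqrt (v1 * v1 + v2 * v2 + v3 * v3)).
  assert (Hr : r * r = v1 * v1 + v2 * v2 + v3 * v3)
    by (apply sqrt_sqrt; nra).
  pose proof (conjby_to_i_unnormalized x0 v1 v2 v3 r Hr) as Hu_conj; simpl in Hu_conj.
  set (u := Quat (r + v1) 0 (- v3) v2) in Hu_conj.
  destruct (Req_EM_T (qnorm2 u) 0) as [Hu | Hu].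
  - unfold u, qnorm2 in Hu; simpl in Hu.
    assert (Hv1 : v1 = - r) by nra.
    assert (Hv2 : v2 = 0) by nra.
    assert (Hv3 : v3 = 0) by nra.
    exists (Quat 0 0 1 0); split.
    + unfold qnorm2; simpl; ring.
    + rewrite Hv1, Hv2, Hv3; unfold conjby, qmul, qconj; simpl; f_equal; ring.
  - destruct (conjby_normalize u (Quat x0 v1 v2 v3) Hu) as [u1 [Hu1 Hc]].
    exists u1; split; [exact Hu1 |].
    rewrite Hc, Hu_conj; unfold qscale; simpl; f_equal; field; exact Hu.
Qed.

Lemma dqconjby_dq_of (u w x y : quat) :
  dqmul (dqmul (dqconj (dq_of u w)) (DQ x y)) (dq_of u w) =
  DQ (conjby u x)
     (qadd (qadd (qmul (conjby u x) w) (conjby u y)) (qmul (qconj w) (conjby u x))).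
Proof.
  destruct u, w, x, y; unfold dq_of, dqmul, dqconj, conjby, qmul, qadd, qconj; simpl.
  f_equal; f_equal; ring.
Qed.

Lemma is_unit_dq_of (u w : quat) : qnorm2 u = 1 -> q0 w = 0 -> is_unit_dq (dq_of u w).
Proof.
  intros Hu Hw; unfold is_unit_dq, dqabs, dq_of; simpl.
  destruct (quat_eq_dec u qzero) as [E | _].
  - rewrite E in Hu; unfold qnorm2 in Hu; simpl in Hu; lra.
  - rewrite (qnorm_eq1 u Hu); f_equal.
    change (qsc (qmul (qconj u) (qmul u w)) / 1 = 0).
    assert (Hsc : qsc (qmul (qconj u) (qmul u w)) = qnorm2 u * q0 w)
      by (destruct u, w; unfold qsc, qnorm2; simpl; ring).
    rewrite Hsc, Hw; field.
Qed.

Lemma complex_pure_commutator (c0 c1 w2 w3 : R) (b : quat) :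
  qadd (qadd (qmul (Quat c0 c1 0 0) (Quat 0 0 w2 w3)) b)
       (qmul (qconj (Quat 0 0 w2 w3)) (Quat c0 c1 0 0)) =
  Quat (q0 b) (q1 b) (q2 b - 2 * c1 * w3) (q3 b + 2 * c1 * w2).
Proof. destruct b; unfold qadd, qmul, qconj; simpl; f_equal; ring. Qed.

Theorem lemma3p3 :
  forall a : dquat,
    exists q : dquat, exists lam : dquat,
      is_unit_dq q /\ is_dual_complex lam /\
      dqmul (dqmul (dqconj q) a) q = lam.
Proof.
  intros [x y].
  destruct (Req_EM_T (qvnorm2 x) 0) as [Hx | Hx].
  - assert (Ex : x = Quat (q0 x) 0 0 0)
      by (destruct x; unfold qvnorm2 in Hx; simpl in *; f_equal; nra).
    destruct (conjby_rotate_to_i y) as [u [Hu Hy]].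
    exists (dq_of u (Quat 0 0 0 0)); eexists.
    split; [apply is_unit_dq_of; auto |].
    split; [| apply dqconjby_dq_of].
    rewrite Ex, conjby_real, Hy, complex_pure_commutator.
    unfold is_dual_complex, is_complex; simpl; lra.
  - destruct (conjby_rotate_to_i x) as [u [Hu Hc]].
    set (r := sqrt (qvnorm2 x)) in Hc.
    assert (Hr : r <> 0)
      by (unfold r; pose proof (sqrt_lt_R0 (qvnorm2 x)); unfold qvnorm2 in *; nra).
    set (b := conjby u y).
    exists (dq_of u (Quat 0 0 (- q3 b / (2 * r)) (q2 b / (2 * r)))); eexists.
    split; [apply is_unit_dq_of; auto |].
    split; [| apply dqconjby_dq_of].
    rewrite Hc; fold b; rewrite complex_pure_commutator.
    unfold is_dual_complex, is_complex; simpl; split; split; field; exact Hr.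
Qed.
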